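(* Let $B$ be a triangulated closed oriented two-dimensional surface, with all triangles oriented consistently with $B$. (1) Consistent collections of framed small necklaces over the simplices of $B$ (equivalently, small framed semisimplicial triangulations of circle bundles over $B$) are in natural bijection with $Or(B)$, the set of orientations of the edges of $B$; the bijection sends a collection to the edge orientations induced by its framings. (2) If $a\in Or(B)$, viewed as a $1$-cochain with values $\pm1$, then the $2$-cochain $\mathcal{F}(da)$ represents the Euler class of the circle bundle determined by the collection of framed small necklaces corresponding to $a$.
   Context: Necklaces: given a semisimplicially triangulated circle bundle $\pi:E\to B$ and a $k$-simplex $\sigma$ of $B$, each $(k+1)$-simplex $\rho$ of $E$ over $\sigma$ has exactly one vertex of $\sigma$ whose preimage in $\rho$ is an edge; label $\rho$ by that vertex. The fibre over an interior point of $\sigma$ is a circle meeting these simplices in a cyclic order; the resulting cyclic word of labels (beads colored by vertices of $\sigma$) is the necklace $\mathcal{O}(\sigma)$. For a face $\tau\subset\sigma$, $\mathcal{O}(\tau)$ is obtained from $\mathcal{O}(\sigma)$ by deleting beads whose colors are not vertices of $\tau$, giving an injective order-preserving morphism $\mathcal{O}(\tau)\to\mathcal{O}(\sigma)$; these morphisms compose consistently. Conversely, a consistent collection of necklaces and morphisms over the simplices of $B$ determines a semisimplicially triangulated circle bundle over $B$. A small necklace has exactly two beads of each color and is invariant under rotation by half its length; it is framed if one bead of each color is marked bold, and a collection of framed necklaces is consistent if the morphisms send bold beads to bold beads. For an edge $ij$ the framed necklace has form $ijij$, and the edge is oriented $i\to j$ iff the bead immediately following the bold $i$ in the positive direction is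 the bold $j$. Elements of $Or(B)$ are identified with $1$-cochains $a$ taking values $\pm1$ ($a$ is $+1$ on an oriented edge iff the chosen orientation agrees with it). $d$ is the simplicial coboundary. $\mathcal{F}:\{\pm1,\pm3\}\to\{\pm1/4\}$ is defined by $\mathcal{F}(3)=\mathcal{F}(-1)=1/4$, $\mathcal{F}(-3)=\mathcal{F}(1)=-1/4$, applied valuewise. Sign convention for the Euler class: it is the class represented by the local-formula cocycle $\varepsilon$, where for an oriented triangle with vertices $0,1,2$ in the order of its orientation, $\varepsilon=\frac{\#(\mathrm{neg})-\#(\mathrm{pos})}{2\#(0)\#(1)\#(2)}$, a triple of distinctly colored beads being positive iff it reads $0,1,2$ in cyclic order along the positive direction. *)

From HB Require Import structures.
From mathcomp Require Import all_boot all_order all_algebra.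
Set Implicit Arguments. Unset Strict Implicit. Unset Printing Implicit Defensive.
Import Order.TTheory GRing.Theory Num.Theory.

Section Defs.
Variable V : finType.

(* ---------- The triangulated closed oriented surface B ----------
   S2   : the set of triangles (2-simplices), each a 3-element vertex set.
   ori  : ori x y z  means [x;y;z] is a triangle and (x,y,z) lists its
          vertices in the order of its (chosen, consistent) orientation. *)

Definition is_edge (S2 : {set {set V}}) (x y : V) : bool :=
  (x != y) && [exists t in S2, (x \in t) && (y \in t)].

Definition is_simplex (S2 : {set {set V}}) (s : {set V}) : bool :=
  (s != set0) && [exists t in S2, s \subset t].

Definition link_rel (S2 : {set {set V}}) (v : V) : rel V :=
  fun u w => [&& u != v, w != v, u != w & [set v; u; w] \in S2].

Definition closed_oriented_surface (S2 : {set {set V}})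
    (ori : V -> V -> V -> bool) : Prop :=
  (forall t, t \in S2 -> #|t| = 3) /\
  (forall v : V, exists2 t, t \in S2 & v \in t) /\
  (forall x y z, ori x y z -> [set x; y; z] \in S2 /\ #|[set x; y; z]| = 3) /\
  (forall x y z, ori x y z -> ori y z x) /\
  (forall x y z, [set x; y; z] \in S2 -> #|[set x; y; z]| = 3 ->
     ori x y z != ori x z y) /\
  (* closed surface, consistently oriented: every oriented edge (x,y) of B
     lies in exactly one positively oriented triangle (so each edge lies in
     exactly two triangles, inducing opposite orientations on it) *)
  (forall x y, is_edge S2 x y -> #|[set z | ori x y z]| = 1) /\
  (* the link of every vertex is connected (hence a circle) *)
  (forall v u w, is_edge S2 v u -> is_edge S2 v w -> connect (link_rel S2 v) u w).

Definition is_orientation (S2 : {set {set V}}) (a : V -> V -> int) : Prop :=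
  forall x y, is_edge S2 x y -> (a x y = 1 \/ a x y = -1)%R /\ a y x = (- a x y)%R.

Definition cobound {R : zmodType} (a : V -> V -> R) (x y z : V) : R :=
  (a y z - a x z + a x y)%R.

(* ---------- Necklaces ----------
   A necklace over a simplex is a cyclic word of colours (vertices), stored
   as a sequence s; beads are the indices i < size s and the positive
   direction of the fibre is increasing index (mod size s). *)

Definition cyc (i j k : nat) : bool :=
  [|| (i < j < k)%N, (j < k < i)%N | (k < i < j)%N].

(* f : O(tau) -> O(sigma) is an injective, colour- and cyclic-order-
   preserving map whose image is exactly the set of beads with colours in
   tau; i.e. O(tau) is O(sigma) with the other beads deleted. *)
Definition neck_morphism (tau : {set V}) (s s' : seq V) (f : nat -> nat) : Prop :=
  (forall i, (i < size s)%N -> (f i < size s')%N) /\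
  (forall i j, (i < size s)%N -> (j < size s)%N -> f i = f j -> i = j) /\
  (forall i, (i < size s)%N -> onth s' (f i) = onth s i) /\
  (forall j c, onth s' j = Some c -> c \in tau ->
     exists2 i, (i < size s)%N & f i = j) /\
  (forall i j k, (i < size s)%N -> (j < size s)%N -> (k < size s)%N ->
     cyc (f i) (f j) (f k) = cyc i j k).

(* A collection of framed necklaces over the simplices of B:
   neck s      the necklace O(s),
   mor t s     the morphism O(t) -> O(s) for a face t of s,
   bold s v    the (index of the) bold bead of colour v in O(s). *)
Record collection := Collection {
  neck : {set V} -> seq V;
  mor : {set V} -> {set V} -> nat -> nat;
  bold : {set V} -> V -> nat }.

Definition framed_small_collection (S2 : {set {set V}}) (C : collection) : Prop :=
  (forall t s, is_simplex S2 t -> is_simplex S2 s -> t \proper s ->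
     neck_morphism t (neck C t) (neck C s) (mor C t s)) /\
  (forall t r s, is_simplex S2 t -> is_simplex S2 r -> is_simplex S2 s ->
     t \proper r -> r \proper s ->
     forall i, (i < size (neck C t))%N -> mor C t s i = mor C r s (mor C t r i)) /\
  (forall s, is_simplex S2 s ->
     [/\ all (fun c => c \in s) (neck C s),
         forall v, v \in s -> count_mem v (neck C s) = 2%N &
         rot (size (neck C s) %/ 2) (neck C s) = neck C s]) /\
  (forall s v, is_simplex S2 s -> v \in s ->
     (bold C s v < size (neck C s))%N /\ onth (neck C s) (bold C s v) = Some v) /\
  (forall t s v, is_simplex S2 t -> is_simplex S2 s -> t \proper s -> v \in t ->
     mor C t s (bold C t v) = bold C s v).

Definition iso_collection (S2 : {set {set V}}) (C C' : collection) : Prop :=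
  exists phi : {set V} -> nat -> nat, forall s, is_simplex S2 s ->
    size (neck C' s) = size (neck C s) /\
    neck_morphism s (neck C s) (neck C' s) (phi s) /\
    (forall v, v \in s -> phi s (bold C s v) = bold C' s v) /\
    (forall t, is_simplex S2 t -> t \proper s ->
       forall i, (i < size (neck C t))%N ->
         phi s (mor C t s i) = mor C' t s (phi t i)).

Definition edge_or (C : collection) (x y : V) : int :=
  let e := [set x; y] in
  if (bold C e x).+1 %% size (neck C e) == bold C e y then 1%R else (-1)%R.

Definition npos (s : seq V) (x y z : V) : nat :=
  (\sum_(i < size s) \sum_(j < size s) \sum_(k < size s)
     [&& onth s i == Some x, onth s j == Some y, onth s k == Some z
       & cyc i j k])%N.

Definition nneg (s : seq V) (x y z : V) : nat :=
  (\sum_(i < size s) \sum_(j < size s) \sum_(k < size s)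
     [&& onth s i == Some x, onth s j == Some y, onth s k == Some z
       & ~~ cyc i j k])%N.

Definition euler_cocycle (C : collection) (x y z : V) : rat :=
  let s := neck C [set x; y; z] in
  ((nneg s x y z)%:R - (npos s x y z)%:R) /
  (2 * count_mem x s * count_mem y s * count_mem z s)%N%:R.

Definition Fq (n : int) : rat :=
  if (n == 3%R) || (n == (-1)%R) then (1 / 4)%R
  else if (n == (-3)%R) || (n == 1%R) then (- (1 / 4))%R else 0%R.

(* the 2-cochain c represents the same class in H^2(B; Q) as the Euler
   cocycle of C: they differ by the coboundary of a rational 1-cochain *)
Definition represents_euler_class (S2 : {set {set V}}) (ori : V -> V -> V -> bool)
    (C : collection) (c : V -> V -> V -> rat) : Prop :=
  exists b : V -> V -> rat,
    (forall x y, is_edge S2 x y -> b y x = (- b x y)%R) /\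
    (forall x y z, ori x y z -> c x y z = (euler_cocycle C x y z + cobound b x y z)%R).

End Defs.

From HB Require Import structures.
From mathcomp Require Import all_boot all_order all_algebra.
From mathcomp Require Import zify.
Import Order.TTheory GRing.Theory Num.Theory.

(* A small necklace over a simplex with k vertices is a word listing the k
   colours once, written twice; so a framing is just one position b c in
   Z/2k for every colour c, the other bead of colour c being b c + k.  The
   orientation of an edge uv, read off any simplex containing it, says whether
   b v lies in the half-turn following b u.  On a triangle the three edge
   orientations determine the positions up to a common rotation, and rotations
   preserve cyclic order, which gives the isomorphism between two collections
   with the same orientations; conversely, ordering the word of each triangle
   according to a(y,z) = a(x,y) a(x,z) and shifting positions by k realises
   every orientation a.  Finally, on a triangle the local formula gives -1/4 or
   1/4 according to the cyclic order of the word, and so does F(da): the Euler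
   cocycle is F(da) itself.  The finitely many configurations of positions on a
   triangle are checked by evaluation. *)

Set Implicit Arguments. Unset Strict Implicit. Unset Printing Implicit Defensive.

Lemma iota_all_ltn n (P : pred nat) : all P (iota 0 n) -> forall i, i < n -> P i.
Proof. by move=> /allP hP i lt_in; apply: hP; rewrite mem_iota. Qed.

(* Reverting the bounded variables one at a time turns the goal into a
   nested [all] over [iota], which is then evaluated. *)
Ltac decide_bounded :=
  repeat match goal with
  | h : is_true (?i < ?n) |- _ => is_var i; move: i h; apply: iota_all_ltn
  end;
  vm_compute; reflexivity.

Lemma modn_lt_double m x : x < 2 * m -> x %% m = if x < m then x else x - m.
Proof.
move=> lt_x2m; case: ltnP => [/modn_small // | le_mx].
by rewrite -{1}(subnK le_mx) modnDr modn_small //; lia.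
Qed.

Definition antipode (k b : nat) : nat := (b + k) %% (2 * k).

Lemma antipodeE k b : b < 2 * k -> antipode k b = if b < k then b + k else b - k.
Proof.
move=> lt_b; rewrite /antipode modn_lt_double; last lia.
by case: (ltnP (b + k) (2 * k)) => ?; case: ltnP => ?; lia.
Qed.

Lemma antipode_lt k b : 0 < k -> antipode k b < 2 * k.
Proof. by move=> k_gt0; rewrite ltn_pmod // muln_gt0. Qed.

Lemma antipode_neq k b : 0 < k -> b < 2 * k -> antipode k b != b.
Proof. by move=> k_gt0 lt_b; rewrite antipodeE //; case: ltnP => ?; apply/eqP; lia. Qed.

Lemma antipode_mod k b : b < 2 * k -> antipode k b %% k = b %% k.
Proof.
move=> lt_b; rewrite antipodeE //; case: ltnP => lt_bk.
- by rewrite modnDr.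
- by rewrite -{2}(subnK lt_bk) modnDr.
Qed.

Lemma eq_mod_antipode k i b : i < 2 * k -> b < 2 * k -> i %% k = b %% k ->
  i = b \/ i = antipode k b.
Proof.
move=> lt_i lt_b; rewrite antipodeE // !modn_lt_double //.
by case: (ltnP i k) => ?; case: (ltnP b k) => ?; lia.
Qed.

Lemma cyc_rotate N d i j l : d < N -> i < N -> j < N -> l < N ->
  cyc ((i + d) %% N) ((j + d) %% N) ((l + d) %% N) = cyc i j l.
Proof.
move=> lt_d lt_i lt_j lt_l; rewrite /cyc !modn_lt_double; try lia.
by case: (ltnP (i + d) N) => ?; case: (ltnP (j + d) N) => ?;
   case: (ltnP (l + d) N) => ?; lia.
Qed.

Lemma cyc_id12 i l : cyc i i l = false. Proof. rewrite /cyc; lia. Qed.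
Lemma cyc_id23 i j : cyc i j j = false. Proof. rewrite /cyc; lia. Qed.
Lemma cyc_id13 i j : cyc i j i = false. Proof. rewrite /cyc; lia. Qed.

(* The orientation of the edge [uv] read off a necklace with [k] colours and
   bold beads at [bu] and [bv]: [u -> v] iff [bv] lies in the half-turn after
   [bu]. *)
Definition bold_or (k bu bv : nat) : int := if cyc bu bv (antipode k bu) then 1%R else (-1)%R.

Lemma bold_or_pm1 k bu bv : bold_or k bu bv = 1%R \/ bold_or k bu bv = (-1)%R.
Proof. by rewrite /bold_or; case: ifP; [left | right]. Qed.

Lemma bold_or_inj k bu bv k' bu' bv' : bold_or k bu bv = bold_or k' bu' bv' ->
  cyc bu bv (antipode k bu) = cyc bu' bv' (antipode k' bu').
Proof. by rewrite /bold_or; do 2 case: ifP. Qed.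

Lemma bold_or_swap k bu bv : bu < 2 * k -> bv < 2 * k -> bu %% k != bv %% k ->
  bold_or k bv bu = (- bold_or k bu bv)%R.
Proof.
move=> lt_u lt_v; rewrite /bold_or !antipodeE // !modn_lt_double // => neq_uv.
suff -> : cyc bv bu (if bv < k then bv + k else bv - k) =
          ~~ cyc bu bv (if bu < k then bu + k else bu - k) by case: cyc.
by move: neq_uv; rewrite /cyc; case: (ltnP bu k) => ?; case: (ltnP bv k) => ?; lia.
Qed.

Lemma onth_nth_lt (T : Type) (x0 : T) s i : i < size s -> onth s i = Some (nth x0 s i).
Proof. by elim: s i => [|a s IH] [|i] //= /IH. Qed.

Lemma onth_size (T : Type) (s : seq T) i c : onth s i = Some c -> i < size s.
Proof. by move=> h; rewrite -onthTE h. Qed.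

Lemma onth_exists (T : Type) (s : seq T) i : i < size s -> exists c, onth s i = Some c.
Proof. by rewrite -onthTE; case: (onth s i) => // c; exists c. Qed.

Section SmallFramed.
Variable V : finType.
Implicit Types (t : {set V}) (s : seq V) (b : V -> nat).

(* The shape of a small framed necklace over [t]: a word listing [t] once,
   written twice (see [small_periodic]). *)
Definition small_framed t s b : Prop :=
  [/\ 0 < #|t|, size s = 2 * #|t|,
      forall i j, i < size s -> j < size s ->
        (onth s i == onth s j) = (i %% #|t| == j %% #|t|),
      forall i c, onth s i = Some c -> c \in t &
      forall c, c \in t -> b c < size s /\ onth s (b c) = Some c].

Lemma size_count_mem t s :
  all (mem t) s -> size s = \sum_(v in t) count_mem v s.
Proof.
elim: s => [|c s IH] /=; first by rewrite big1.
case/andP=> ct /IH ->; rewrite big_split /= -add1n; congr (_ + _).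
rewrite (bigD1 c) //= eqxx big1 // => v /andP[_ /negbTE].
by rewrite eq_sym => ->.
Qed.

Lemma small_periodic t s :
  0 < #|t| -> all (mem t) s -> (forall v, v \in t -> count_mem v s = 2) ->
  rot (size s %/ 2) s = s ->
  size s = 2 * #|t| /\ forall i j, i < size s -> j < size s ->
     (onth s i == onth s j) = (i %% #|t| == j %% #|t|).
Proof.
move=> t_gt0 s_t count2 rot_s.
set k := #|t| in t_gt0 count2 *.
have size_s : size s = 2 * k.
  rewrite (size_count_mem s_t) (eq_bigr (fun _ => 2)); last by move=> v /count2.
  by rewrite sum_nat_const mulnC.
split=> //; rewrite size_s mulKn // in rot_s.
set w := take k s.
have s_ww : s = w ++ w.
  have drop_w : drop k s = w.
    have /eqP : drop k s ++ take k s = take k s ++ drop k s.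
      by rewrite cat_take_drop; exact: rot_s.
    rewrite eqseq_cat; first by case/andP=> /eqP.
    by rewrite size_drop size_takel size_s; lia.
  by rewrite -{1}(cat_take_drop k s) drop_w.
have size_w : size w = k by rewrite size_takel // size_s; lia.
have uniq_w : uniq w.
  apply/card_uniqP; rewrite size_w /k; apply: eq_card => v; apply/idP/idP.
  - by move=> vw; apply: (allP s_t); rewrite s_ww mem_cat vw.
  - move=> /count2; rewrite s_ww count_cat => c2.
    by apply/negPn/negP => /count_memPn; lia.
case/card_gt0P: (t_gt0) => x0 _.
have onth_s i : i < size s -> onth s i = Some (nth x0 w (i %% k)).
  move=> lt_is; rewrite (onth_nth_lt x0 lt_is) {1}s_ww nth_cat size_w.
  case: ltnP => le_ki; first by rewrite modn_small.
  by rewrite modn_lt_double -?size_s // ltnNge le_ki.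
move=> i j lt_i lt_j; rewrite (onth_s i lt_i) (onth_s j lt_j) (inj_eq Some_inj).
by rewrite nth_uniq // size_w ltn_pmod.
Qed.

Section Necklace.
Variables (t : {set V}) (s : seq V) (b : V -> nat).
Hypothesis small : small_framed t s b.

Lemma small_bold c : c \in t -> b c < size s /\ onth s (b c) = Some c.
Proof. by case: small => _ _ _ _; apply. Qed.

Lemma small_bead i c : onth s i = Some c ->
  c \in t /\ (i = b c \/ i = antipode #|t| (b c)).
Proof.
case: small => _ size_s periodic colour _ s_i; have ct := colour _ _ s_i.
split=> //; have [lt_b s_b] := small_bold ct.
apply: eq_mod_antipode; rewrite -?size_s ?(onth_size s_i) //.
by apply/eqP; rewrite -periodic ?(onth_size s_i) // s_i s_b.
Qed.

Lemma small_antipode c : c \in t ->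
  [/\ antipode #|t| (b c) < size s, onth s (antipode #|t| (b c)) = Some c
    & antipode #|t| (b c) != b c].
Proof.
case: small => t_gt0 size_s periodic _ _ ct; have [lt_b s_b] := small_bold ct.
rewrite size_s in lt_b *; split; [exact: antipode_lt | | exact: antipode_neq].
by rewrite -s_b; apply/eqP; rewrite periodic ?size_s ?antipode_lt ?antipode_mod.
Qed.

Lemma small_bead_eq i j c : onth s i = Some c -> onth s j = Some c ->
  (i == b c) = (j == b c) -> i = j.
Proof.
move=> s_i s_j; have [ct _] := small_bead s_i.
have [_ _ /negbTE neq] := small_antipode ct.
by case: (small_bead s_i) => _ [] ->; case: (small_bead s_j) => _ [] ->;
   rewrite ?eqxx ?neq.
Qed.

Lemma small_bold_mod_neq u v : u \in t -> v \in t -> u != v -> b u %% #|t| != b v %% #|t|.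
Proof.
case: small => _ _ periodic _ _ ut vt uv.
have [lt_u s_u] := small_bold ut; have [lt_v s_v] := small_bold vt.
by rewrite -periodic // s_u s_v (inj_eq Some_inj).
Qed.

Lemma small_bold_lt c : c \in t -> b c < 2 * #|t|.
Proof. by case: small => _ <- _ _ _ /small_bold []. Qed.

End Necklace.
End SmallFramed.

Section Transport.
Variable V : finType.
Variables (t1 t2 : {set V}) (s1 s2 : seq V) (b1 b2 : V -> nat).
Hypotheses (small1 : small_framed t1 s1 b1) (small2 : small_framed t2 s2 b2).

Lemma morphism_bead tau f i c : neck_morphism tau s1 s2 f -> f (b1 c) = b2 c ->
  onth s1 i = Some c -> f i = if i == b1 c then b2 c else antipode #|t2| (b2 c).
Proof.
case=> _ [f_inj [f_col _]] f_bold s1_i.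
case: (small_bead small1 s1_i) => ct [-> | ->]; first by rewrite eqxx.
have [lt_a s1_a neq] := small_antipode small1 ct; rewrite (negbTE neq).
have [lt_b _] := small_bold small1 ct.
have s2_fa : onth s2 (f (antipode #|t1| (b1 c))) = Some c by rewrite f_col // s1_a.
case: (small_bead small2 s2_fa) => _ [f_a | ->] //.
by move: neq; rewrite (f_inj _ _ lt_a lt_b) ?eqxx // f_a f_bold.
Qed.

Lemma morphism_antipode tau f c : neck_morphism tau s1 s2 f -> c \in t1 ->
  f (b1 c) = b2 c -> f (antipode #|t1| (b1 c)) = antipode #|t2| (b2 c).
Proof.
move=> mf ct f_bold; have [_ s1_a neq] := small_antipode small1 ct.
by rewrite (morphism_bead mf f_bold s1_a) (negbTE neq).
Qed.

Lemma morphism_bold_or tau f u v : neck_morphism tau s1 s2 f -> u \in t1 -> v \in t1 ->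
  f (b1 u) = b2 u -> f (b1 v) = b2 v ->
  bold_or #|t2| (b2 u) (b2 v) = bold_or #|t1| (b1 u) (b1 v).
Proof.
move=> mf ut vt f_u f_v; have [lt_a _ _] := small_antipode small1 ut.
have [lt_u _] := small_bold small1 ut; have [lt_v _] := small_bold small1 vt.
case: (mf) => _ [_ [_ [_ f_cyc]]].
by rewrite /bold_or -(morphism_antipode mf ut f_u) -f_u -f_v f_cyc.
Qed.

Definition transport (i : nat) : nat :=
  if onth s1 i is Some c then (if i == b1 c then b2 c else antipode #|t2| (b2 c)) else 0.

Hypothesis t12 : t1 \subset t2.

Lemma transport_bead i c : onth s1 i = Some c ->
  [/\ transport i < size s2, onth s2 (transport i) = Some c
    & (transport i == b2 c) = (i == b1 c)].
Proof.
move=> s1_i; have ct : c \in t2 by apply: (subsetP t12); case: (small_bead small1 s1_i).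
have [lt_b s2_b] := small_bold small2 ct.
have [lt_a s2_a neq] := small_antipode small2 ct.
by rewrite /transport s1_i; case: eqP; rewrite ?eqxx ?(negbTE neq).
Qed.

Lemma transport_bold c : c \in t1 -> transport (b1 c) = b2 c.
Proof. by move=> ct; have [_ s1_b] := small_bold small1 ct; rewrite /transport s1_b eqxx. Qed.

Lemma transport_antipode c : c \in t1 -> transport (antipode #|t1| (b1 c)) = antipode #|t2| (b2 c).
Proof.
move=> ct; have [_ s1_a neq] := small_antipode small1 ct.
by rewrite /transport s1_a (negbTE neq).
Qed.

Lemma transport_morphism :
  (forall i j k, i < size s1 -> j < size s1 -> k < size s1 ->
     cyc (transport i) (transport j) (transport k) = cyc i j k) ->
  neck_morphism t1 s1 s2 transport.
Proof.
move=> tr_cyc; split; [|split; [|split; [|split]]] => //.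
- by move=> i /onth_exists [c /transport_bead []].
- move=> i j /onth_exists [c s1_i] /onth_exists [d s1_j] tr_ij.
  have [_ s2_i bold_i] := transport_bead s1_i.
  have [_ s2_j bold_j] := transport_bead s1_j.
  have cd : c = d by move: s2_i; rewrite tr_ij s2_j => -[].
  subst d; apply: (small_bead_eq small1 s1_i s1_j).
  by rewrite -bold_i -bold_j tr_ij.
- by move=> i /onth_exists [c s1_i]; case: (transport_bead s1_i) => _ -> _.
- move=> j c s2_j ct; case: (small_bead small2 s2_j) => _ [-> | ->].
  + by exists (b1 c); [case: (small_bold small1 ct) | rewrite transport_bold].
  + exists (antipode #|t1| (b1 c)); last by rewrite transport_antipode.
    by case: (small_antipode small1 ct).
Qed.

End Transport.

Lemma transport_trans (V : finType) (t1 t2 t3 : {set V}) s1 s2 b1 b2 b3 :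
  small_framed t1 s1 b1 -> small_framed t2 s2 b2 -> t1 \subset t2 ->
  forall i, i < size s1 -> transport t3 s1 b1 b3 i = transport t3 s2 b2 b3 (transport t2 s1 b1 b2 i).
Proof.
move=> small1 small2 t12 i /onth_exists [c s1_i].
have [_ s2_i bold_i] := transport_bead small1 small2 t12 s1_i.
by rewrite {1}/transport s1_i {1}/transport s2_i bold_i.
Qed.

Lemma transport_rotation (V : finType) (t : {set V}) s1 s2 b1 b2 d :
  small_framed t s1 b1 -> small_framed t s2 b2 ->
  (forall c, c \in t -> b2 c = (b1 c + d) %% (2 * #|t|)) ->
  forall i, i < size s1 -> transport t s1 b1 b2 i = (i + d) %% (2 * #|t|).
Proof.
move=> small1 small2 rot_b i /onth_exists [c s1_i].
case: (small_bead small1 s1_i) => ct [-> | ->].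
  by rewrite (transport_bold _ _ small1) // rot_b.
rewrite (transport_antipode _ _ small1) // rot_b // /antipode.
by rewrite !modnDml addnAC.
Qed.

Lemma edge_bolds_rotated bu bv bu' bv' : bu < 4 -> bv < 4 -> bu' < 4 -> bv' < 4 ->
  bu %% 2 != bv %% 2 -> bu' %% 2 != bv' %% 2 ->
  bold_or 2 bu bv = bold_or 2 bu' bv' -> bv' = (bv + (bu' + 4 - bu) %% 4) %% 4.
Proof. by move=> ? ? ? ? ? ? /bold_or_inj; rewrite /antipode /cyc; lia. Qed.

Lemma triangle_bolds_rotated b1 b2 b3 c1 c2 c3 :
  b1 < 6 -> b2 < 6 -> b3 < 6 -> c1 < 6 -> c2 < 6 -> c3 < 6 ->
  [==> b1 %% 3 != b2 %% 3, b1 %% 3 != b3 %% 3, b2 %% 3 != b3 %% 3,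
       c1 %% 3 != c2 %% 3, c1 %% 3 != c3 %% 3, c2 %% 3 != c3 %% 3,
       bold_or 3 b1 b2 == bold_or 3 c1 c2, bold_or 3 b1 b3 == bold_or 3 c1 c3,
       bold_or 3 b2 b3 == bold_or 3 c2 c3 =>
   (c2 == (b2 + (c1 + 6 - b1) %% 6) %% 6) && (c3 == (b3 + (c1 + 6 - b1) %% 6) %% 6)].
Proof. move=> *; decide_bounded. Qed.

Definition edge_into_triangle (bu bv cu cv i : nat) : nat :=
  if i %% 2 == bu %% 2 then (if i == bu then cu else antipode 3 cu)
  else (if i == bv then cv else antipode 3 cv).

Lemma edge_into_triangle_cyc bu bv cu cv i j l :
  bu < 4 -> bv < 4 -> cu < 6 -> cv < 6 -> i < 4 -> j < 4 -> l < 4 ->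
  [==> bu %% 2 != bv %% 2, cu %% 3 != cv %% 3, bold_or 2 bu bv == bold_or 3 cu cv =>
   cyc (edge_into_triangle bu bv cu cv i) (edge_into_triangle bu bv cu cv j)
       (edge_into_triangle bu bv cu cv l) == cyc i j l].
Proof. move=> *; decide_bounded. Qed.

Section EdgeIntoTriangle.
Variables (V : finType) (t s : {set V}) (st ss : seq V) (bt bs : V -> nat).
Hypotheses (small_t : small_framed t st bt) (small_s : small_framed s ss bs).
Hypotheses (card2 : #|t| = 2) (card3 : #|s| = 3).
Variables (u v : V).
Hypotheses (enum_t : enum t = [:: u; v]) (us : u \in s) (vs : v \in s).

Lemma transport_edge_triangle m : m < size st ->
  transport s st bt bs m = edge_into_triangle (bt u) (bt v) (bs u) (bs v) m.
Proof.
move=> /onth_exists [c t_m]; have [ct _] := small_bead small_t t_m.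
have [ut vt] : u \in t /\ v \in t by rewrite -!(mem_enum t) enum_t !inE !eqxx ?orbT.
have vu : v != u by move: (enum_uniq t); rewrite enum_t /= inE andbT eq_sym.
have m_mod : m %% 2 = bt c %% 2.
  have [lt_c t_c] := small_bold small_t ct.
  case: small_t => _ _ periodic _ _; apply/eqP.
  by rewrite -card2 -periodic ?(onth_size t_m) // t_m t_c.
have neq_vu := small_bold_mod_neq small_t vt ut vu.
rewrite /transport t_m /edge_into_triangle card3 m_mod.
move: ct; rewrite -(mem_enum t) enum_t !inE => /orP [] /eqP ->; first by rewrite eqxx.
by rewrite -card2 (negbTE neq_vu).
Qed.

Lemma transport_edge_triangle_cyc :
  bold_or #|t| (bt u) (bt v) = bold_or #|s| (bs u) (bs v) ->
  forall i j l, i < size st -> j < size st -> l < size st ->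
  cyc (transport s st bt bs i) (transport s st bt bs j) (transport s st bt bs l) = cyc i j l.
Proof.
move=> same_or i j l lt_i lt_j lt_l; rewrite !transport_edge_triangle //.
have [ut vt] : u \in t /\ v \in t by rewrite -!(mem_enum t) enum_t !inE !eqxx ?orbT.
have uv : u != v by move: (enum_uniq t); rewrite enum_t /= inE andbT.
have neq_t := small_bold_mod_neq small_t ut vt uv.
have neq_s := small_bold_mod_neq small_s us vs uv.
have size_t : size st = 4 by case: small_t => _ ->; rewrite card2.
have lt_t c : c \in t -> bt c < 4 by move=> ct; rewrite -size_t; case: (small_bold small_t ct).
have lt_s c : c \in s -> bs c < 6 by move=> cs; have := small_bold_lt small_s cs; rewrite card3.
rewrite size_t in lt_i lt_j lt_l; rewrite card2 card3 in neq_t neq_s same_or.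
have := edge_into_triangle_cyc (lt_t u ut) (lt_t v vt) (lt_s u us) (lt_s v vs) lt_i lt_j lt_l.
by rewrite neq_t neq_s same_or eqxx => /eqP.
Qed.

End EdgeIntoTriangle.

Lemma big_ord_sumn n (F : nat -> nat) : \sum_(i < n) F i = sumn [seq F i | i <- iota 0 n].
Proof. by rewrite -(big_mkord xpredT) sumnE big_map /index_iota subn0. Qed.

(* [npos] and [nneg] of a triangle necklace in a form that evaluates: its six
   beads are coloured by their residues mod 3. *)
Definition cyc_count (P : bool -> bool) (px py pz : nat) : nat :=
  sumn [seq sumn [seq sumn [seq nat_of_bool
     [&& i %% 3 == px, j %% 3 == py, k %% 3 == pz & P (cyc i j k)]
     | k <- iota 0 6] | j <- iota 0 6] | i <- iota 0 6].

Lemma euler_triangle_bolds b1 b2 b3 : b1 < 6 -> b2 < 6 -> b3 < 6 ->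
  [==> b1 %% 3 != b2 %% 3, b1 %% 3 != b3 %% 3, b2 %% 3 != b3 %% 3 =>
   (((cyc_count negb (b1 %% 3) (b2 %% 3) (b3 %% 3))%N%:R -
     (cyc_count id (b1 %% 3) (b2 %% 3) (b3 %% 3))%N%:R) / (2 * 2 * 2 * 2)%N%:R
    == Fq (bold_or 3 b2 b3 - bold_or 3 b1 b3 + bold_or 3 b1 b2) :> rat)%R].
Proof. move=> *; decide_bounded. Qed.

Lemma card_set3 (V : finType) (x y z : V) :
  #|[set x; y; z]| = 3 -> [/\ x != y, y != z & x != z].
Proof.
rewrite (setUC ([set x] :|: [set y])) cardsU1 cardsU1 cards1 !inE.
by case: (eqVneq x y) => xy; case: (eqVneq y z) => yz; case: (eqVneq x z) => xz //=;
   subst; rewrite ?eqxx //= in xy yz xz *.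
Qed.

Lemma enum_card2 (V : finType) (t : {set V}) : #|t| = 2 ->
  exists x y, [/\ x != y, enum t = [:: x; y], x \in t & y \in t].
Proof.
rewrite cardE => card2; have := enum_uniq t; have := mem_enum t.
case: (enum t) card2 => [|x [|y []]] // _ mem_t /=; rewrite inE andbT => xy.
by exists x, y; rewrite -!mem_t !inE !eqxx ?orbT.
Qed.

Lemma enum_card3 (V : finType) (t : {set V}) : #|t| = 3 ->
  exists x y z, [/\ [/\ x != y, x != z & y != z], enum t = [:: x; y; z],
                    x \in t, y \in t & z \in t].
Proof.
rewrite cardE => card3; have := enum_uniq t; have := mem_enum t.
case: (enum t) card3 => [|x [|y [|z []]]] // _ mem_t /=.
rewrite !inE !negb_or andbT => /andP [/andP [xy xz] yz].
by exists x, y, z; rewrite -!mem_t !inE !eqxx ?orbT.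
Qed.

Lemma card_edge (V : finType) (x y : V) : x != y -> #|[set x; y]| = 2.
Proof. by rewrite cards2 => ->. Qed.

Lemma edge_or_edge (V : finType) (C : collection V) x y : x != y ->
  small_framed [set x; y] (neck C [set x; y]) (bold C [set x; y]) ->
  edge_or C x y = bold_or 2 (bold C [set x; y] x) (bold C [set x; y] y).
Proof.
move=> xy small_e; have xe : x \in [set x; y] by rewrite !inE eqxx.
have ye : y \in [set x; y] by rewrite !inE eqxx orbT.
have := small_bold_mod_neq small_e xe ye xy.
have := small_bold_lt small_e xe; have := small_bold_lt small_e ye.
rewrite /edge_or /bold_or; case: small_e => _ -> _ _ _; rewrite card_edge //.
move: (bold C _ x) (bold C _ y) => p q lt_q lt_p neq.
by congr (if _ then _ else _); rewrite /antipode /cyc; lia.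
Qed.

Section Simplices.
Variables (V : finType) (S2 : {set {set V}}).

Lemma edge_of_simplex s u v :
  is_simplex S2 s -> u \in s -> v \in s -> u != v -> is_edge S2 u v.
Proof.
case/andP=> _ /existsP [t /andP [tS st]] us vs uv.
by rewrite /is_edge uv; apply/existsP; exists t; rewrite tS !(subsetP st).
Qed.

Lemma edge_simplex u v : is_edge S2 u v -> is_simplex S2 [set u; v].
Proof.
case/andP=> _ /existsP [t /and3P [tS ut vt]].
rewrite /is_simplex; apply/andP; split; first by apply/set0Pn; exists u; rewrite !inE eqxx.
by apply/existsP; exists t; rewrite tS subUset !sub1set ut vt.
Qed.

Variable ori : V -> V -> V -> bool.
Hypothesis surf : closed_oriented_surface S2 ori.

Lemma simplex_card s : is_simplex S2 s -> 0 < #|s| <= 3.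
Proof.
case: surf => card_tri _; case/andP=> s0 /existsP [t /andP [tS st]].
by rewrite card_gt0 s0 -(card_tri t tS) subset_leq_card.
Qed.

Lemma collection_small C s : framed_small_collection S2 C -> is_simplex S2 s ->
  small_framed s (neck C s) (bold C s).
Proof.
case=> _ [_ [smallC [framedC _]]] simplex_s.
have [s_s count2 rot_s] := smallC s simplex_s.
have /andP [s_gt0 _] := simplex_card simplex_s.
have [size_s periodic] := small_periodic s_gt0 s_s count2 rot_s.
split=> //; last by move=> c cs; apply: framedC.
by move=> i c s_i; apply: (allP s_s); apply/onthP; exists i.
Qed.

Lemma edge_or_simplex C s u v : framed_small_collection S2 C -> is_simplex S2 s ->
  u \in s -> v \in s -> u != v -> edge_or C u v = bold_or #|s| (bold C s u) (bold C s v).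
Proof.
move=> hC simplex_s us vs uv; set e := [set u; v].
have simplex_e : is_simplex S2 e by apply/edge_simplex/(edge_of_simplex simplex_s).
have small_e := collection_small hC simplex_e.
have ue : u \in e by rewrite !inE eqxx.
have ve : v \in e by rewrite !inE eqxx orbT.
rewrite (edge_or_edge uv small_e) -(card_edge uv).
have [<- // | neq_es] := eqVneq e s.
have proper_es : e \proper s by rewrite properEneq neq_es subUset !sub1set us vs.
case: (hC) => morC [_ [_ [_ boldC]]].
have mor_es := morC _ _ simplex_e simplex_s proper_es.
by rewrite (morphism_bold_or small_e (collection_small hC simplex_s) mor_es ue ve) ?boldC.
Qed.

Lemma edge_or_orientation C : framed_small_collection S2 C -> is_orientation S2 (edge_or C).
Proof.
move=> hC x y exy; have xy : x != y by case/andP: exy.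
have small_e := collection_small hC (edge_simplex exy).
have xe : x \in [set x; y] by rewrite !inE eqxx.
have ye : y \in [set x; y] by rewrite !inE eqxx orbT.
have yx : y != x by rewrite eq_sym.
have small_e' : small_framed [set y; x] (neck C [set y; x]) (bold C [set y; x]).
  by rewrite setUC.
rewrite (edge_or_edge xy small_e) (edge_or_edge yx small_e') [[set y; x]]setUC.
split; first exact: bold_or_pm1.
rewrite -(card_edge xy) bold_or_swap ?(small_bold_lt small_e) //.
exact: (small_bold_mod_neq small_e xe ye xy).
Qed.

Lemma iso_edge_or C C' : framed_small_collection S2 C -> framed_small_collection S2 C' ->
  iso_collection S2 C C' -> forall x y, is_edge S2 x y -> edge_or C x y = edge_or C' x y.
Proof.
move=> hC hC' [phi iso] x y exy; have xy : x != y by case/andP: exy.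
have simplex_e := edge_simplex exy.
have small_e := collection_small hC simplex_e.
have small_e' := collection_small hC' simplex_e.
have xe : x \in [set x; y] by rewrite !inE eqxx.
have ye : y \in [set x; y] by rewrite !inE eqxx orbT.
have [_ [mphi [phi_bold _]]] := iso _ simplex_e.
rewrite (edge_or_edge xy small_e) (edge_or_edge xy small_e').
rewrite -(card_edge xy) (morphism_bold_or small_e small_e' mphi xe ye) //.
all: exact: phi_bold.
Qed.

End Simplices.

Section Isomorphism.
Variables (V : finType) (S2 : {set {set V}}) (ori : V -> V -> V -> bool).
Hypothesis surf : closed_oriented_surface S2 ori.
Variables C C' : collection V.
Hypotheses (hC : framed_small_collection S2 C) (hC' : framed_small_collection S2 C').
Hypothesis same_or : forall x y, is_edge S2 x y -> edge_or C x y = edge_or C' x y.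

Lemma bolds_rotated s : is_simplex S2 s ->
  exists2 d, d < 2 * #|s| & forall c, c \in s -> bold C' s c = (bold C s c + d) %% (2 * #|s|).
Proof.
move=> simplex_s.
have small_s := collection_small surf hC simplex_s.
have small_s' := collection_small surf hC' simplex_s.
have lt_b c : c \in s -> bold C s c < 2 * #|s| by apply: (small_bold_lt small_s).
have lt_b' c : c \in s -> bold C' s c < 2 * #|s| by apply: (small_bold_lt small_s').
have same_bold_or u v : u \in s -> v \in s -> u != v ->
    bold_or #|s| (bold C s u) (bold C s v) = bold_or #|s| (bold C' s u) (bold C' s v).
  move=> us vs uv; rewrite -(edge_or_simplex surf hC simplex_s us vs uv).
  by rewrite -(edge_or_simplex surf hC' simplex_s us vs uv) same_or // (edge_of_simplex simplex_s).
have neq_b u v : u \in s -> v \in s -> u != v -> bold C s u %% #|s| != bold C s v %% #|s|.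
  exact: (small_bold_mod_neq small_s).
have neq_b' u v : u \in s -> v \in s -> u != v -> bold C' s u %% #|s| != bold C' s v %% #|s|.
  exact: (small_bold_mod_neq small_s').
have /andP [s_gt0 s_le3] := simplex_card surf simplex_s.
have [card1 | [card2 | card3]] : #|s| = 1 \/ #|s| = 2 \/ #|s| = 3 by lia.
- have /cards1P [v s_v] : #|s| == 1 by rewrite card1.
  have vs : v \in s by rewrite s_v inE.
  exists ((bold C' s v + 2 - bold C s v) %% 2); first by rewrite card1 ltn_pmod.
  move=> c; rewrite {1}s_v inE => /eqP ->; move: (lt_b v vs) (lt_b' v vs).
  by rewrite card1; lia.
- have [x [y [xy enum_s xs ys]]] := enum_card2 card2.
  exists ((bold C' s x + 4 - bold C s x) %% 4); first by rewrite card2 ltn_pmod.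
  have := same_bold_or x y xs ys xy; have := neq_b x y xs ys xy.
  have := neq_b' x y xs ys xy; move: lt_b lt_b'; rewrite card2 => lt_b lt_b'.
  move=> neq' neq same c; rewrite -mem_enum enum_s !inE => /orP [] /eqP ->.
    by have := lt_b x xs; have := lt_b' x xs; lia.
  exact: (edge_bolds_rotated (lt_b x xs) (lt_b y ys) (lt_b' x xs) (lt_b' y ys) neq neq' same).
- have [x [y [z [[xy xz yz] enum_s xs ys zs]]]] := enum_card3 card3.
  move: lt_b lt_b' neq_b neq_b' same_bold_or; rewrite card3.
  move=> lt_b lt_b' neq_b neq_b' same_bold_or.
  have := triangle_bolds_rotated (lt_b x xs) (lt_b y ys) (lt_b z zs)
    (lt_b' x xs) (lt_b' y ys) (lt_b' z zs).
  rewrite !neq_b ?neq_b' ?same_bold_or ?eqxx //= => /andP [/eqP rot_y /eqP rot_z].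
  exists ((bold C' s x + 6 - bold C s x) %% 6); first by rewrite ltn_pmod.
  move=> c; rewrite -mem_enum enum_s !inE => /or3P [] /eqP -> //.
  by have := lt_b x xs; have := lt_b' x xs; lia.
Qed.

Lemma iso_of_edge_or : iso_collection S2 C C'.
Proof.
exists (fun s => transport s (neck C s) (bold C s) (bold C' s)) => s simplex_s.
have small_s := collection_small surf hC simplex_s.
have small_s' := collection_small surf hC' simplex_s.
split; first by case: small_s => _ -> _ _ _; case: small_s' => _ -> _ _ _.
split.
  apply: (transport_morphism small_s small_s' (subxx s)) => i j l lt_i lt_j lt_l.
  have [d lt_d rot_b] := bolds_rotated simplex_s.
  have size_s : size (neck C s) = 2 * #|s| by case: small_s.
  rewrite !(transport_rotation small_s small_s' rot_b) //.
  by rewrite size_s in lt_i lt_j lt_l; rewrite cyc_rotate.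
split; first by move=> v; apply: (transport_bold _ _ small_s).
move=> t simplex_t proper_ts i /onth_exists [c t_i].
have small_t := collection_small surf hC simplex_t.
have small_t' := collection_small surf hC' simplex_t.
have [ct _] := small_bead small_t t_i.
have cs : c \in s by apply: (subsetP (proper_sub proper_ts)).
case: (hC) (hC') => morC [_ [_ [_ boldC]]] [morC' [_ [_ [_ boldC']]]].
rewrite (morphism_bead small_t small_s (morC _ _ simplex_t simplex_s proper_ts)
  (boldC _ _ _ simplex_t simplex_s proper_ts ct) t_i).
have [_ t'_i bold_i] := transport_bead small_t small_t' (subxx t) t_i.
rewrite (morphism_bead small_t' small_s' (morC' _ _ simplex_t simplex_s proper_ts)
  (boldC' _ _ _ simplex_t simplex_s proper_ts ct) t'_i) bold_i.
by case: eqP => _; [apply: (transport_bold _ _ small_s) | apply: (transport_antipode _ _ small_s)].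
Qed.

End Isomorphism.

Section Construction.
Variables (V : finType) (a : V -> V -> int).
Implicit Type t : {set V}.

(* In the word [x y z] the framings only realise orientations with
   [a y z = a x y * a x z]; the other orientations use the word [x z y]. *)
Definition ordered_word t : seq V :=
  if enum t is [:: x; y; z] then
    if a y z == (a x y * a x z)%R then [:: x; y; z] else [:: x; z; y]
  else enum t.

Definition std_neck t : seq V := ordered_word t ++ ordered_word t.

(* The first colour [x] of the word is bold at index 0 and another colour [c]
   is bold in the first copy of the word iff [a] orients [x -> c]; this is
   what makes [bold_or] read off [a]. *)
Definition std_bold t (c : V) : nat :=
  let w := ordered_word t in
  index c w + (if (c == head c w) || (a (head c w) c == 1%R) then 0 else #|t|).

Definition orientation_on t : Prop :=
  forall p q, p \in t -> q \in t -> p != q ->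
    a q p = (- a p q)%R /\ (a p q = 1%R \/ a p q = (-1)%R).

Lemma perm_ordered_word t : perm_eq (ordered_word t) (enum t).
Proof.
rewrite /ordered_word; case: (enum t) => [|x [|y [|z []]]] //; case: ifP => _ //.
by rewrite perm_cons (perm_catC [:: z] [:: y]).
Qed.

Lemma std_neck_small t :
  [/\ all (mem t) (std_neck t), forall v, v \in t -> count_mem v (std_neck t) = 2
    & rot (size (std_neck t) %/ 2) (std_neck t) = std_neck t].
Proof.
have perm_w := perm_ordered_word t.
have uniq_w : uniq (ordered_word t) by rewrite (perm_uniq perm_w) enum_uniq.
have mem_w c : (c \in ordered_word t) = (c \in t) by rewrite (perm_mem perm_w) mem_enum.
split.
- by apply/allP => c; rewrite mem_cat orbb mem_w.
- by move=> v vt; rewrite count_cat (count_uniq_mem _ uniq_w) mem_w vt.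
- by rewrite size_cat addnn -mul2n mulKn // rot_size_cat.
Qed.

Lemma std_bold_spec t c : c \in t ->
  std_bold t c < size (std_neck t) /\ onth (std_neck t) (std_bold t c) = Some c.
Proof.
move=> ct; have perm_w := perm_ordered_word t.
have size_w : size (ordered_word t) = #|t| by rewrite (perm_size perm_w) cardE.
have cw : c \in ordered_word t by rewrite (perm_mem perm_w) mem_enum.
have lt_i : index c (ordered_word t) < #|t| by rewrite -size_w index_mem.
have onth_i : onth (ordered_word t) (index c (ordered_word t)) = Some c.
  by rewrite (onth_nth_lt c) ?nth_index ?size_w.
rewrite /std_neck /std_bold /= size_cat size_w onth_cat size_w.
case: (_ || _); rewrite ?addn0.
- by rewrite lt_i onth_i; split=> //; lia.
- have -> : index c (ordered_word t) + #|t| < #|t| = false by lia.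
  by rewrite addnK onth_i; split=> //; lia.
Qed.

Lemma std_small t : 0 < #|t| -> small_framed t (std_neck t) (std_bold t).
Proof.
move=> t_gt0; have [t_s count2 rot_s] := std_neck_small t.
have [size_s periodic] := small_periodic t_gt0 t_s count2 rot_s.
split=> //; last exact: std_bold_spec.
by move=> i c s_i; apply: (allP t_s); apply/onthP; exists i.
Qed.

Lemma std_bold_or t u v : 1 < #|t| <= 3 -> orientation_on t ->
  u \in t -> v \in t -> u != v -> bold_or #|t| (std_bold t u) (std_bold t v) = a u v.
Proof.
move=> /andP [t_gt1 t_le3] ort ut vt uv.
have [card2 | card3] : #|t| = 2 \/ #|t| = 3 by lia.
- have [x [y [xy enum_t xt yt]]] := enum_card2 card2.
  have [a_yx a_xy] := ort x y xt yt xy.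
  have yx : y != x by rewrite eq_sym.
  move: ut vt uv; rewrite -!(mem_enum t) /std_bold /ordered_word enum_t card2 !inE.
  case/orP=> /eqP->; case/orP=> /eqP->; rewrite ?eqxx //= ?(negbTE xy) ?(negbTE yx) /= ?a_yx ?eqxx;
  by case: a_xy => ->.
- have [x [y [z [[xy xz yz] enum_t xt yt zt]]]] := enum_card3 card3.
  have [a_yx a_xy] := ort x y xt yt xy.
  have [a_zx a_xz] := ort x z xt zt xz.
  have [a_zy a_yz] := ort y z yt zt yz.
  have [yx zx zy] : [/\ y != x, z != x & z != y] by rewrite !(eq_sym _ x) (eq_sym z y).
  have [[w_eq a_yz'] | [w_eq a_yz']] :
      (ordered_word t = [:: x; y; z] /\ a y z = (a x y * a x z)%R) \/
      (ordered_word t = [:: x; z; y] /\ a y z = (- (a x y * a x z))%R).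
    rewrite /ordered_word enum_t; case: eqP => a_rel; [left | right] => //.
    by split=> //; move: a_rel; case: a_xy => ->; case: a_xz => ->; case: a_yz => ->.
  all: move: ut vt uv; rewrite -!(mem_enum t) /std_bold w_eq enum_t card3 !inE.
  all: case/or3P=> /eqP->; case/or3P=> /eqP->; rewrite ?eqxx //=.
  all: rewrite ?(negbTE xy) ?(negbTE xz) ?(negbTE yz) ?(negbTE yx) ?(negbTE zx) ?(negbTE zy) /=.
  all: rewrite ?eqxx ?a_yx ?a_zx ?a_zy ?a_yz'.
  all: by case: a_xy => e_xy; case: a_xz => e_xz; rewrite ?e_xy ?e_xz.
Qed.
End Construction.

Section StandardCollection.
Variables (V : finType) (S2 : {set {set V}}) (ori : V -> V -> V -> bool).
Hypothesis surf : closed_oriented_surface S2 ori.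
Variable a : V -> V -> int.
Hypothesis a_or : is_orientation S2 a.

Lemma orientation_on_simplex s : is_simplex S2 s -> orientation_on a s.
Proof. by move=> simplex_s p q ps qs pq; have [] := a_or (edge_of_simplex simplex_s ps qs pq). Qed.

Definition std_collection : collection V :=
  Collection (std_neck a) (fun t s => transport s (std_neck a t) (std_bold a t) (std_bold a s))
    (std_bold a).

Lemma std_small_simplex s : is_simplex S2 s -> small_framed s (std_neck a s) (std_bold a s).
Proof. by move=> /(simplex_card surf) /andP [s_gt0 _]; apply: std_small. Qed.

Lemma std_morphism t s : is_simplex S2 t -> is_simplex S2 s -> t \proper s ->
  neck_morphism t (std_neck a t) (std_neck a s)
    (transport s (std_neck a t) (std_bold a t) (std_bold a s)).
Proof.
move=> simplex_t simplex_s proper_ts.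
have small_t := std_small_simplex simplex_t; have small_s := std_small_simplex simplex_s.
apply: (transport_morphism small_t small_s (proper_sub proper_ts)) => i j l lt_i lt_j lt_l.
have size_t : size (std_neck a t) = 2 * #|t| by case: small_t.
have /andP [t_gt0 _] := simplex_card surf simplex_t.
have /andP [_ s_le3] := simplex_card surf simplex_s.
have lt_ts := proper_card proper_ts.
have [card1 | card2] : #|t| = 1 \/ #|t| = 2 by lia.
  have : i = j \/ j = l \/ i = l by move: lt_i lt_j lt_l; rewrite size_t card1; lia.
  by case=> [-> | [-> | ->]]; rewrite ?cyc_id12 ?cyc_id23 ?cyc_id13.
have card3 : #|s| = 3 by lia.
have [u [v [uv enum_t ut vt]]] := enum_card2 card2.
have [us vs] : u \in s /\ v \in s by rewrite !(subsetP (proper_sub proper_ts)).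
have or_t := orientation_on_simplex simplex_t; have or_s := orientation_on_simplex simplex_s.
apply: (transport_edge_triangle_cyc small_t small_s card2 card3 enum_t us vs) => //.
by rewrite !std_bold_or ?card2 ?card3.
Qed.

Lemma std_collection_framed : framed_small_collection S2 std_collection.
Proof.
split; first exact: std_morphism.
split.
  move=> t r s simplex_t simplex_r _ proper_tr _ i lt_i /=.
  exact: (transport_trans _ _ (std_small_simplex simplex_t) (std_small_simplex simplex_r)
            (proper_sub proper_tr) lt_i).
split; first by move=> s _; apply: std_neck_small.
split; first by move=> s v _; apply: std_bold_spec.
move=> t s v simplex_t _ _ vt /=.
by apply: (transport_bold _ _ (std_small_simplex simplex_t)).
Qed.

Lemma std_collection_edge_or x y : is_edge S2 x y -> edge_or std_collection x y = a x y.
Proof.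
move=> exy; have xy : x != y by case/andP: exy.
have simplex_e := edge_simplex exy.
rewrite (@edge_or_edge _ std_collection _ _ xy (std_small_simplex simplex_e)) -(card_edge xy) /=.
by apply: std_bold_or; rewrite ?inE ?eqxx ?orbT ?card_edge //; exact: orientation_on_simplex.
Qed.

End StandardCollection.

Lemma sum3_sumn n (F : nat -> nat -> nat -> nat) :
  \sum_(i < n) \sum_(j < n) \sum_(k < n) F i j k =
  sumn [seq sumn [seq sumn [seq F i j k | k <- iota 0 n] | j <- iota 0 n] | i <- iota 0 n].
Proof.
rewrite (big_ord_sumn n (fun i => \sum_(j < n) \sum_(k < n) F i j k)).
congr sumn; apply: eq_map => i; rewrite (big_ord_sumn n (fun j => \sum_(k < n) F i j k)).
by congr sumn; apply: eq_map => j; rewrite (big_ord_sumn n (F i j)).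
Qed.

Section Triangle.
Variables (V : finType) (t : {set V}) (s : seq V) (b : V -> nat).
Hypotheses (small : small_framed t s b) (card3 : #|t| = 3).
Variables (x y z : V).
Hypotheses (xt : x \in t) (yt : y \in t) (zt : z \in t).

Lemma onth_triangle i c : c \in t -> i < 6 -> (onth s i == Some c) = (i %% 3 == b c %% 3).
Proof.
move=> ct lt_i; have [lt_b s_b] := small_bold small ct.
case: small => _ size_s periodic _ _; rewrite card3 in size_s periodic.
by rewrite -s_b periodic // size_s.
Qed.

Lemma npos_nneg_triangle :
  npos s x y z = cyc_count id (b x %% 3) (b y %% 3) (b z %% 3) /\
  nneg s x y z = cyc_count negb (b x %% 3) (b y %% 3) (b z %% 3).
Proof.
have size_s : size s = 6 by case: small => _ -> _ _ _; rewrite card3.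
rewrite /npos /nneg /cyc_count -!sum3_sumn size_s.
by split; apply: eq_bigr => i _; apply: eq_bigr => j _; apply: eq_bigr => k _;
   rewrite !onth_triangle.
Qed.

End Triangle.

Section EulerClass.
Variables (V : finType) (S2 : {set {set V}}) (ori : V -> V -> V -> bool).
Hypothesis surf : closed_oriented_surface S2 ori.
Variables (C : collection V) (a : V -> V -> int).
Hypothesis hC : framed_small_collection S2 C.
Hypothesis C_a : forall x y, is_edge S2 x y -> edge_or C x y = a x y.

Lemma euler_cocycle_triangle x y z : ori x y z -> euler_cocycle C x y z = Fq (cobound a x y z).
Proof.
move=> oxyz; have [_ [_ [ori_tri _]]] := surf.
have [tS card3] := ori_tri _ _ _ oxyz; have [xy yz xz] := card_set3 card3.
set t := [set x; y; z] in tS card3 *.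
have [xt yt zt] : [/\ x \in t, y \in t & z \in t] by rewrite !inE !eqxx ?orbT.
have simplex_t : is_simplex S2 t.
  by apply/andP; split; [apply/set0Pn; exists x | apply/existsP; exists t; rewrite tS subxx].
have small_t := collection_small surf hC simplex_t.
have a_t u v : u \in t -> v \in t -> u != v -> a u v = bold_or 3 (bold C t u) (bold C t v).
  move=> ut vt uv; rewrite -C_a ?(edge_of_simplex simplex_t) //.
  by rewrite (edge_or_simplex surf hC simplex_t) // card3.
have [_ [_ [smallC _]]] := hC; have [_ count2 _] := smallC t simplex_t.
rewrite /cobound !a_t // /euler_cocycle -/t !count2 //.
have [-> ->] := npos_nneg_triangle small_t card3 xt yt zt.
have lt_b u : u \in t -> bold C t u < 6.
  by move=> ut; have := small_bold_lt small_t ut; rewrite card3.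
have := euler_triangle_bolds (lt_b x xt) (lt_b y yt) (lt_b z zt).
by rewrite -card3 !(small_bold_mod_neq small_t) // => /eqP.
Qed.

End EulerClass.

Unset Implicit Arguments. Set Strict Implicit. Set Printing Implicit Defensive.

Theorem mainTheorem9 (V : finType) (S2 : {set {set V}})
    (ori : V -> V -> V -> bool) :
  closed_oriented_surface S2 ori ->
  [/\ (forall C, framed_small_collection S2 C -> is_orientation S2 (edge_or C)),
      (forall C C', framed_small_collection S2 C -> framed_small_collection S2 C' ->
         iso_collection S2 C C' ->
         forall x y, is_edge S2 x y -> edge_or C x y = edge_or C' x y),
      (forall C C', framed_small_collection S2 C -> framed_small_collection S2 C' ->
         (forall x y, is_edge S2 x y -> edge_or C x y = edge_or C' x y) ->
         iso_collection S2 C C'),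
      (forall a, is_orientation S2 a ->
         exists C, framed_small_collection S2 C /\
           forall x y, is_edge S2 x y -> edge_or C x y = a x y)
    & (forall a C, is_orientation S2 a -> framed_small_collection S2 C ->
         (forall x y, is_edge S2 x y -> edge_or C x y = a x y) ->
         represents_euler_class S2 ori C (fun x y z => Fq (cobound a x y z)))].
Proof.
move=> surf; split.
- exact: (edge_or_orientation surf).
- exact: (iso_edge_or surf).
- exact: (iso_of_edge_or surf).
- move=> a a_or; exists (std_collection a); split.
    exact: (std_collection_framed surf a_or).
  exact: (std_collection_edge_or surf a_or).
- move=> a C _ hC C_a; exists (fun _ _ => 0%R); split=> [x y _ | x y z oxyz].
    by rewrite oppr0.
  by rewrite (euler_cocycle_triangle surf hC C_a oxyz) /cobound subrr !addr0.
Qed.
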